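(* Let $\models$ be an intersective mixed consequence truth-relation on a finite set $V$ of truth values, with induced consequence relation $\vdash$ in a constant expressive setting. The following are equivalent: (i) $\vdash$ admits a G-conjunction; (ii) every minimal representation of $\models$ is based on a conjunction-compatible list of sets of designated values; (iii) some representation of $\models$ is based on a conjunction-compatible list of sets of designated values.
   Context: $V$ contains distinct $1,0$; sets of designated values: $\mathcal{D}\subseteq V$, $1\in\mathcal{D}$, $0\notin\mathcal{D}$. $\gamma\models_{\mathcal{D}_p,\mathcal{D}_c}\delta$ iff ($\gamma\subseteq\mathcal{D}_p\Rightarrow\delta\cap\mathcal{D}_c\neq\emptyset$). An intersective mixed truth-relation is $\models_{\mathcal{D}_p^1,\mathcal{D}_c^1}\cap\dots\cap\models_{\mathcal{D}_p^K,\mathcal{D}_c^K}$; such a list is a representation, based on the list of sets $\mathcal{D}_p^1,\mathcal{D}_c^1,\dots,\mathcal{D}_p^K,\mathcal{D}_c^K$; it is minimal if $K$ is least possible. A list $\mathcal{D}_1,\dots,\mathcal{D}_n$ is conjunction-compatible if for all $x,y\in V$ there is $z\in V$ such that for every $i$: $z\in\mathcal{D}_i$ iff ($x\in\mathcal{D}_i$ and $y\in\mathcal{D}_i$). Semantics: valuations mapping atoms to $V$, connectives interpreted by fixed truth functions, extended compositionally, every assignment to finitely many distinct atoms realized; constant expressive: every value is the constant value of some formula. $\Gamma\vdash\Delta$ iff $v(\Gamma)\models v(\Delta)$ for all $v$. A G-conjunction is a binary connective $\wedge$ (interpreted by some truth function) with, for all $\Gamma,\Delta,A,B$: $\Gamma\cup\{A\wedge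 B\}\vdash\Delta$ iff $\Gamma\cup\{A,B\}\vdash\Delta$; and $\Gamma\vdash\{A\wedge B\}\cup\Delta$ iff ($\Gamma\vdash\{A\}\cup\Delta$ and $\Gamma\vdash\{B\}\cup\Delta$). *)

From mathcomp Require Import all_boot.
From mathcomp Require Import boolp.
Set Implicit Arguments. Unset Strict Implicit. Unset Printing Implicit Defensive.

Section Semantics.
Variable V : finType.

Definition designated (one zero : V) (D : {set V}) : Prop :=
  one \in D /\ zero \notin D.

Definition mixed_tr (Dp Dc : {set V}) (g d : {set V}) : Prop :=
  g \subset Dp -> d :&: Dc != set0.

Definition is_rep (one zero : V) (models : {set V} -> {set V} -> Prop)
    (L : seq ({set V} * {set V})) : Prop :=
  [/\ 0 < size L,
      (forall p, p \in L -> designated one zero p.1 /\ designated one zero p.2)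
    & forall g d, models g d <-> (forall p, p \in L -> mixed_tr p.1 p.2 g d)].

Definition intersective (one zero : V) (models : {set V} -> {set V} -> Prop) :=
  exists L, is_rep one zero models L.

Definition minimal_rep (one zero : V) (models : {set V} -> {set V} -> Prop)
    (L : seq ({set V} * {set V})) : Prop :=
  is_rep one zero models L /\
  forall L', is_rep one zero models L' -> size L <= size L'.

(* the list of sets Dp^1, Dc^1, ..., Dp^K, Dc^K on which L is based *)
Definition sets_of (L : seq ({set V} * {set V})) : seq {set V} :=
  flatten [seq [:: p.1; p.2] | p <- L].

Definition conj_compatible (Ds : seq {set V}) : Prop :=
  forall x y : V, exists z : V,
    forall i, i < size Ds ->
      (z \in nth set0 Ds i) = (x \in nth set0 Ds i) && (y \in nth set0 Ds i).

Inductive form (C : Type) (ar : C -> nat) : Type :=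
  | Atom of nat
  | App (c : C) of ('I_(ar c) -> form ar).

Fixpoint eval (C : Type) (ar : C -> nat)
    (interp : forall c : C, ('I_(ar c) -> V) -> V) (v : nat -> V)
    (A : form ar) {struct A} : V :=
  match A with
  | Atom n => v n
  | App c args => interp c (fun i => eval interp v (args i))
  end.

Definition constant_expressive (C : Type) (ar : C -> nat)
    (interp : forall c : C, ('I_(ar c) -> V) -> V) : Prop :=
  forall x : V, exists A : form ar, forall v : nat -> V, eval interp v A = x.

Definition img (C : Type) (ar : C -> nat)
    (interp : forall c : C, ('I_(ar c) -> V) -> V) (v : nat -> V)
    (G : form ar -> Prop) : {set V} :=
  [set x : V | `[< exists A, G A /\ eval interp v A = x >]].

Definition cons (C : Type) (ar : C -> nat)
    (interp : forall c : C, ('I_(ar c) -> V) -> V)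
    (models : {set V} -> {set V} -> Prop) (G D : form ar -> Prop) : Prop :=
  forall v : nat -> V, models (img interp v G) (img interp v D).

Definition addf (T : Type) (G : T -> Prop) (A : T) : T -> Prop :=
  fun X => G X \/ X = A.

Definition ext_ar (C : Type) (ar : C -> nat) (o : option C) : nat :=
  match o with Some c => ar c | None => 2 end.

Definition ext_interp (C : Type) (ar : C -> nat)
    (interp : forall c : C, ('I_(ar c) -> V) -> V) (f : V -> V -> V) :
    forall o : option C, ('I_(ext_ar ar o) -> V) -> V :=
  fun o => match o return ('I_(ext_ar ar o) -> V) -> V with
           | Some c => interp c
           | None => fun a => f (a ord0) (a ord_max)
           end.

Definition conjf (C : Type) (ar : C -> nat) (A B : form (ext_ar ar)) :
    form (ext_ar ar) :=
  @App _ (ext_ar ar) None (fun i : 'I_2 => if i == ord0 then A else B).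

Definition is_Gconj (C : Type) (ar : C -> nat)
    (interp : forall c : C, ('I_(ar c) -> V) -> V)
    (models : {set V} -> {set V} -> Prop) (f : V -> V -> V) : Prop :=
  let I := ext_interp interp f in
  forall (G D : form (ext_ar ar) -> Prop) (A B : form (ext_ar ar)),
    (cons I models (addf G (conjf A B)) D <->
       cons I models (addf (addf G A) B) D) /\
    (cons I models G (addf D (conjf A B)) <->
       (cons I models G (addf D A) /\ cons I models G (addf D B))).

Definition admits_Gconj (C : Type) (ar : C -> nat)
    (interp : forall c : C, ('I_(ar c) -> V) -> V)
    (models : {set V} -> {set V} -> Prop) : Prop :=
  exists f : V -> V -> V, is_Gconj interp models f.

End Semantics.

From mathcomp Require Import all_boot.
From mathcomp Require Import boolp.
Set Implicit Arguments. Unset Strict Implicit. Unset Printing Implicit Defensive.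

(* The three conditions are linked through a semantic property of a binary
   truth function f, [conj_function]: |= treats f x y on the left like the two
   premises x, y and on the right like the two alternatives x, y.  Over a
   constant expressive language, a connective interpreted by f is a
   G-conjunction exactly when f has this property.  If the sets of a
   representation are closed under a meet f, then f has it.  Conversely, no
   component (P, Q) of a minimal representation is implied by another one, so
   (P, ~Q) is the only refutation of |= extending P on the left and ~Q on the
   right; testing the two rules of f against this refutation shows that f x y
   is a meet for P and for Q. *)

Section ConjCompatible.
Variable V : finType.

Definition conj_on (f : V -> V -> V) (D : {set V}) : Prop :=
  forall x y, (f x y \in D) = (x \in D) && (y \in D).

Lemma conj_compatibleP (Ds : seq {set V}) :
  conj_compatible Ds <-> exists f, {in Ds, forall D, conj_on f D}.
Proof.
split=> [compat | [f conj_f] x y].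
  exists (fun x y => sval (cid (compat x y))) => D D_Ds x y.
  by rewrite -(nth_index set0 D_Ds); apply: (svalP (cid (compat x y))); rewrite index_mem.
by exists (f x y) => i lt_i_Ds; apply/conj_f/mem_nth.
Qed.

Lemma conj_compatible_sets_ofP (L : seq ({set V} * {set V})) :
  conj_compatible (sets_of L) <->
  exists f, forall p, p \in L -> conj_on f p.1 /\ conj_on f p.2.
Proof.
apply: iff_trans (conj_compatibleP _) _; split=> -[f conj_f]; exists f.
  by move=> p pL; split; apply/conj_f/flatten_mapP; exists p; rewrite // !inE eqxx ?orbT.
by move=> D /flatten_mapP[p /conj_f[conj1 conj2]]; rewrite !inE => /orP[]/eqP->.
Qed.

End ConjCompatible.

Section MinimalRepresentations.
Variables (V : finType) (one zero : V) (models : {set V} -> {set V} -> Prop).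

Lemma mixed_tr_weaken (Dp Dc Ep Ec g d : {set V}) :
  Dp \subset Ep -> Ec \subset Dc -> mixed_tr Ep Ec g d -> mixed_tr Dp Dc g d.
Proof.
move=> DEp EDc EPc gDp; apply: contraNneq (EPc (subset_trans gDp DEp)) => dDc0.
by rewrite -subset0 -dDc0 setIS.
Qed.

Lemma exists_minimal_rep :
  intersective one zero models -> exists L, minimal_rep one zero models L.
Proof.
case=> L0 repL0.
have ex_size : exists n, `[< exists L, is_rep one zero models L /\ size L = n >].
  by exists (size L0); apply/asboolP; exists L0.
case: (ex_minnP ex_size) => _ /asboolP[L [repL <-]] min_size.
by exists L; split=> // L' repL'; apply: min_size; apply/asboolP; exists L'.
Qed.

Lemma is_rep_rem L p q :
  is_rep one zero models L -> p \in L -> q \in L -> q != p ->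
  p.1 \subset q.1 -> q.2 \subset p.2 -> is_rep one zero models (rem p L).
Proof.
move=> [_ desL repL] pL qL qp pq1 qp2.
have q_rem : q \in rem p L by apply: rem_mem.
split; first by case: (rem p L) q_rem.
  by move=> r /mem_rem; apply: desL.
move=> g d; apply: iff_trans (repL g d) _.
split=> models_gd r rL; first exact: models_gd _ (mem_rem rL).
have [-> | rp] := eqVneq r p; last exact: models_gd _ (rem_mem rp rL).
exact: mixed_tr_weaken pq1 qp2 (models_gd q q_rem).
Qed.

Lemma minimal_rep_irredundant L p q :
  minimal_rep one zero models L -> p \in L -> q \in L ->
  p.1 \subset q.1 -> q.2 \subset p.2 -> q = p.
Proof.
move=> [repL min_size] pL qL pq1 qp2; apply/eqP; apply: contraT => qp.
have := min_size _ (is_rep_rem repL pL qL qp pq1 qp2).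
by case: repL => size_gt0 _ _; rewrite size_rem // leqNgt ltn_predL size_gt0.
Qed.

Lemma minimal_rep_models L p (h d : {set V}) :
  minimal_rep one zero models L -> p \in L ->
  p.1 \subset h -> ~: p.2 \subset d ->
  models h d <-> (h != p.1) || (d != ~: p.2).
Proof.
move=> minL pL ph pd; have [[_ _ repL] _] := minL.
split=> [models_hd | neq_hd].
  apply: contraPT models_hd => /norP[/negPn/eqP-> /negPn/eqP->].
  by move/repL/(_ p pL (subxx _)); rewrite setIC setICr eqxx.
apply/repL => q qL hq; apply: contraTneq neq_hd => dq0.
have qd : q.2 \subset ~: d by rewrite -disjoints_subset disjoint_sym -setI_eq0 dq0.
have qp2 : q.2 \subset p.2 by rewrite (subset_trans qd) // -setCS setCK.
have qp := minimal_rep_irredundant minL pL qL (subset_trans ph hq) qp2.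
rewrite qp in hq qd.
by rewrite negb_or !negbK !eqEsubset hq ph pd subsetC qd.
Qed.

Lemma minimal_rep_modelsUl L p :
  minimal_rep one zero models L -> p \in L -> forall g : {set V},
  models (g :|: p.1) (~: p.2) <-> ~~ (g \subset p.1).
Proof.
move=> minL pL g; rewrite (minimal_rep_models minL pL) ?subsetUr //.
by rewrite eqxx orbF (sameP eqP setUidPr).
Qed.

Lemma minimal_rep_modelsUr L p :
  minimal_rep one zero models L -> p \in L -> forall e : {set V},
  models p.1 (e :|: ~: p.2) <-> ~~ (e \subset ~: p.2).
Proof.
move=> minL pL e; rewrite (minimal_rep_models minL pL) ?subsetUr //.
by rewrite eqxx (sameP eqP setUidPr).
Qed.

End MinimalRepresentations.

Section ConjFunction.
Variables (V : finType) (one zero : V) (models : {set V} -> {set V} -> Prop).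

Record conj_function (f : V -> V -> V) : Prop := ConjFunction {
  models_conjl : forall g d x y, models (f x y |: g) d <-> models (y |: (x |: g)) d;
  models_conjr : forall g d x y,
    models g (f x y |: d) <-> models g (x |: d) /\ models g (y |: d)
}.

Lemma setU1I_neq0 (x : V) (A B : {set V}) :
  ((x |: A) :&: B != set0) = (x \in B) || (A :&: B != set0).
Proof. by rewrite setIUl setU_eq0 negb_and setI_eq0 disjoints1 negbK. Qed.

Lemma conj_function_of_rep L f :
  is_rep one zero models L ->
  (forall p, p \in L -> conj_on f p.1 /\ conj_on f p.2) -> conj_function f.
Proof.
move=> [_ _ repL] conj_f; split=> g d x y; rewrite !repL.
  have mixed_conjl p : p \in L ->
      mixed_tr p.1 p.2 (f x y |: g) d <-> mixed_tr p.1 p.2 (y |: (x |: g)) d.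
    move=> /conj_f[conj1 _]; rewrite /mixed_tr !subUset !sub1set conj1.
    by rewrite andbA (andbC (y \in _)).
  by split=> models_gd p pL; apply/(mixed_conjl p pL)/models_gd.
have mixed_conjr p : p \in L -> mixed_tr p.1 p.2 g (f x y |: d) <->
    mixed_tr p.1 p.2 g (x |: d) /\ mixed_tr p.1 p.2 g (y |: d).
  move=> /conj_f[_ conj2]; rewrite /mixed_tr !setU1I_neq0 conj2 orb_andl.
  split=> [mixed | [mixed_x mixed_y] gp]; first by split=> /mixed/andP[].
  by rewrite mixed_x ?mixed_y.
split=> [models_gd | [models_x models_y] p pL].
  by split=> p pL; have [] := (mixed_conjr p pL).1 (models_gd p pL).
by apply/(mixed_conjr p pL); split; [apply: models_x | apply: models_y].
Qed.

Lemma minimal_rep_conj_on L f :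
  minimal_rep one zero models L -> conj_function f ->
  forall p, p \in L -> conj_on f p.1 /\ conj_on f p.2.
Proof.
move=> minL [conjl conjr] p pL; split=> x y.
  have := conjl p.1 (~: p.2) x y; rewrite setUA.
  rewrite !(minimal_rep_modelsUl minL pL) subUset !sub1set.
  by rewrite andbC => eq_not; apply/idP/idP; apply: contraLR => /eq_not.
have := conjr p.1 (~: p.2) x y.
rewrite !(minimal_rep_modelsUr minL pL) !sub1set !inE !negbK.
by move=> eq_mem; apply/idP/andP => /eq_mem.
Qed.

End ConjFunction.

Section Consequence.
Variables (V : finType) (C : Type) (ar : C -> nat).
Variables (interp : forall c : C, ('I_(ar c) -> V) -> V).
Variable models : {set V} -> {set V} -> Prop.

Lemma img_addf v (G : form ar -> Prop) (A : form ar) :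
  img interp v (addf G A) = eval interp v A |: img interp v G.
Proof.
apply/setP=> x; rewrite !inE; apply/asboolP/orP.
  case=> B [[GB | ->] <-]; last by left.
  by right; apply/asboolP; exists B.
case=> [/eqP-> | /asboolP[B [GB <-]]]; first by exists A; split; first right.
by exists B; split; first left.
Qed.

Lemma cons_const (x0 : V) G D (g d : {set V}) :
  (forall v, img interp v G = g) -> (forall v, img interp v D = d) ->
  cons interp models G D <-> models g d.
Proof.
move=> imgG imgD; split=> [|models_gd v]; last by rewrite imgG imgD.
by move/(_ (fun _ => x0)); rewrite imgG imgD.
Qed.

Lemma exists_const_img :
  constant_expressive interp ->
  forall g : {set V}, exists G, forall v, img interp v G = g.
Proof.
move=> const_exp g; have [cst cstP] := choice const_exp.
exists (fun A => exists2 x, x \in g & A = cst x) => v.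
apply/setP=> x; rewrite inE; apply/asboolP/idP.
  by case=> _ [[y yg ->] <-]; rewrite cstP.
by move=> xg; exists (cst x); split; [exists x | rewrite cstP].
Qed.

End Consequence.

Section GConjunction.
Variables (V : finType) (C : Type) (ar : C -> nat).
Variables (interp : forall c : C, ('I_(ar c) -> V) -> V).
Variable models : {set V} -> {set V} -> Prop.

Fixpoint lift_form (A : form ar) : form (ext_ar ar) :=
  match A with
  | Atom n => @Atom _ (ext_ar ar) n
  | App c args => @App _ (ext_ar ar) (Some c) (fun i => lift_form (args i))
  end.

Lemma eval_lift_form f v (A : form ar) :
  eval (ext_interp interp f) v (lift_form A) = eval interp v A.
Proof.
elim: A => [n | c args IH] //=.
by congr (@interp c _); apply: funext => i; apply: IH.
Qed.

Lemma constant_expressive_ext f :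
  constant_expressive interp -> constant_expressive (ext_interp interp f).
Proof.
move=> const_exp x; have [A evalA] := const_exp x.
by exists (lift_form A) => v; rewrite eval_lift_form.
Qed.

Lemma eval_conjf f v (A B : form (ext_ar ar)) :
  eval (ext_interp interp f) v (conjf A B) =
  f (eval (ext_interp interp f) v A) (eval (ext_interp interp f) v B).
Proof. by []. Qed.

Lemma conj_function_Gconj f : conj_function models f -> is_Gconj interp models f.
Proof.
move=> [conjl conjr] G D A B; rewrite /cons; split.
  by split=> models_v v; move: (models_v v); rewrite !img_addf eval_conjf => /conjl.
split=> [models_v | [models_x models_y] v].
  by split=> v; have := models_v v; rewrite !img_addf eval_conjf => /conjr[].
move: (models_x v) (models_y v); rewrite !img_addf eval_conjf => models_xv models_yv.
exact/conjr.
Qed.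

Lemma Gconj_conj_function f :
  constant_expressive interp -> is_Gconj interp models f -> conj_function models f.
Proof.
move=> /(constant_expressive_ext f) const_exp Gconj_f.
pose I := ext_interp interp f; have [cst cstP] := choice const_exp.
split=> g d x y.
  have [G imgG] := exists_const_img const_exp g.
  have [D imgD] := exists_const_img const_exp d.
  have [conjl _] := Gconj_f G D (cst x) (cst y).
  have img_conj v : img I v (addf G (conjf (cst x) (cst y))) = f x y |: g.
    by rewrite img_addf eval_conjf !cstP imgG.
  have img_pair v : img I v (addf (addf G (cst x)) (cst y)) = y |: (x |: g).
    by rewrite !img_addf !cstP imgG.
  by rewrite -(cons_const _ x img_conj imgD) -(cons_const _ x img_pair imgD).
have [G imgG] := exists_const_img const_exp g.
have [D imgD] := exists_const_img const_exp d.
have [_ conjr] := Gconj_f G D (cst x) (cst y).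
have img_conj v : img I v (addf D (conjf (cst x) (cst y))) = f x y |: d.
  by rewrite img_addf eval_conjf !cstP imgD.
have img_alt z v : img I v (addf D (cst z)) = z |: d by rewrite img_addf cstP imgD.
rewrite -(cons_const _ x imgG img_conj) -(cons_const _ x imgG (img_alt x)).
by rewrite -(cons_const _ x imgG (img_alt y)).
Qed.

End GConjunction.

Theorem theorem7p4 (V : finType) (one zero : V)
    (C : Type) (ar : C -> nat) (interp : forall c : C, ('I_(ar c) -> V) -> V)
    (models : {set V} -> {set V} -> Prop) :
  one != zero ->
  intersective one zero models ->
  constant_expressive interp ->
  (admits_Gconj interp models <->
     (forall L, minimal_rep one zero models L -> conj_compatible (sets_of L)))
  /\
  ((forall L, minimal_rep one zero models L -> conj_compatible (sets_of L)) <->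
     (exists L, is_rep one zero models L /\ conj_compatible (sets_of L))).
Proof.
move=> _ rep_models const_exp.
have i_ii : admits_Gconj interp models ->
    forall L, minimal_rep one zero models L -> conj_compatible (sets_of L).
  case=> f /(Gconj_conj_function const_exp) conj_f L minL.
  by apply/conj_compatible_sets_ofP; exists f; exact: minimal_rep_conj_on minL conj_f.
have ii_iii : (forall L, minimal_rep one zero models L -> conj_compatible (sets_of L)) ->
    exists L, is_rep one zero models L /\ conj_compatible (sets_of L).
  move=> compat_min; have [L minL] := exists_minimal_rep rep_models.
  by exists L; split; [case: minL | apply: compat_min].
have iii_i : (exists L, is_rep one zero models L /\ conj_compatible (sets_of L)) ->
    admits_Gconj interp models.
  case=> L [repL /conj_compatible_sets_ofP[f conj_f]]; exists f.
  exact/conj_function_Gconj/(conj_function_of_rep repL).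
by split; split; auto.
Qed.
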